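(* Let $n\ge1$ be an integer, $\beta>0$ and $0<\gamma\le1$. Let $(s,z)$ be the Nielsen–Olesen vortex profile (see context), and for an integer $m$ set $x=(\gamma-1)z-\frac{2\gamma n+m}{2r}$, $y=\gamma z-\frac{2\gamma n+m}{2r}$. Then for no integer $m$ do there exist real functions $u,v$ on $(0,\infty)$, not both identically zero, satisfying the linearized equations \begin{align*} &v''+\tfrac{v'}{r}-\tfrac{v}{r^2}+2\big(2y'u+yu'+\tfrac{1}{r}yu\big)-\gamma v s^2=0,\\ &v'y-vy'+\big(2y^2+\tfrac{\gamma}{2}s^2\big)u=0, \end{align*} with the finite-energy boundary conditions $u=u_0r^k(1+o(1))$, $v=v_0r^k(1+o(1))$ as $r\to0$ for some $k>-\tfrac12$, and exponential decay of $u,v$ (like $e^{-\sqrt\gamma\, r}$ up to powers of $r$) as $r\to\infty$. That is, in the gauge where the Higgs doublet has a single (lower) component, there is no perturbative solution of the Euler–Lagrange equations about the embedded Nielsen–Olesen ($Z_{NO}$) vortex configuration.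
   Context: The Nielsen–Olesen vortex profile $(s,z)$ with winding number $n$ consists of real functions on $(0,\infty)$ solving $s''+\frac{s'}{r}-[z^2+\frac{\beta}{2}(s^2-1)]s=0$ and $z''+\frac{z'}{r}-\frac{z}{r^2}-zs^2=0$, with $s=s_0r^n(1+o(1))$, $z=\frac nr+z_0r+o(r)$ as $r\to0$ and $s\to1$, $z\to0$ exponentially as $r\to\infty$. The lower Higgs component is $\Phi_0 s e^{in\varphi}$ and $u,v$ are the radial/azimuthal profiles of a $W$ field $\propto[u\,\mathbf e_r+iv\,\mathbf e_\varphi]e^{im\varphi}$; to lowest order in $u,v$ the other fields stay at their vortex values $s$, $x$, $y$ above. $\beta=(M_H/M_Z)^2$, $\gamma=\cos^2\theta_{\rm w}$. *)

From Stdlib Require Import Reals ZArith.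
From Coquelicot Require Import Coquelicot.
Open Scope R_scope.

Definition lim0r (f : R -> R) (l : R) : Prop :=
  filterlim f (at_right 0) (locally l).

Definition NO_profile (n : nat) (beta : R) (s z : R -> R) : Prop :=
  (forall r, 0 < r ->
     ex_derive s r /\ ex_derive (Derive s) r /\
     ex_derive z r /\ ex_derive (Derive z) r) /\
  (forall r, 0 < r ->
     Derive (Derive s) r + Derive s r / r
     - (z r ^ 2 + beta / 2 * (s r ^ 2 - 1)) * s r = 0) /\
  (forall r, 0 < r ->
     Derive (Derive z) r + Derive z r / r - z r / r ^ 2 - z r * s r ^ 2 = 0) /\
  (exists s0 eps, lim0r eps 0 /\
     forall r, 0 < r -> s r = s0 * r ^ n * (1 + eps r)) /\
  (exists z0 eps, lim0r eps 0 /\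
     forall r, 0 < r -> z r = INR n / r + z0 * r + r * eps r) /\
  (exists C a R0, 0 < a /\
     forall r, R0 < r ->
       Rabs (s r - 1) <= C * exp (- a * r) /\ Rabs (z r) <= C * exp (- a * r)).

Definition yfun (gamma : R) (n : nat) (m : Z) (z : R -> R) : R -> R :=
  fun r => gamma * z r - (2 * gamma * INR n + IZR m) / (2 * r).

(* x = (gamma-1) z - (2 gamma n + m)/(2r)  (does not enter the equations below) *)
Definition xfun (gamma : R) (n : nat) (m : Z) (z : R -> R) : R -> R :=
  fun r => (gamma - 1) * z r - (2 * gamma * INR n + IZR m) / (2 * r).

Definition W_perturbation (gamma : R) (n : nat) (m : Z) (s z u v : R -> R) : Prop :=
  let y := yfun gamma n m z in
  (forall r, 0 < r ->
     ex_derive u r /\ ex_derive v r /\ ex_derive (Derive v) r) /\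
  (forall r, 0 < r ->
     Derive (Derive v) r + Derive v r / r - v r / r ^ 2
     + 2 * (2 * Derive y r * u r + y r * Derive u r + y r * u r / r)
     - gamma * v r * s r ^ 2 = 0) /\
  (forall r, 0 < r ->
     Derive v r * y r - v r * Derive y r
     + (2 * y r ^ 2 + gamma / 2 * s r ^ 2) * u r = 0) /\
  (exists k u0 v0 eu ev, -1/2 < k /\ lim0r eu 0 /\ lim0r ev 0 /\
     forall r, 0 < r ->
       u r = u0 * Rpower r k * (1 + eu r) /\ v r = v0 * Rpower r k * (1 + ev r)) /\
  (exists C p R0, 0 < R0 /\ forall r, R0 < r ->
     Rabs (u r) <= C * Rpower r p * exp (- sqrt gamma * r) /\
     Rabs (v r) <= C * Rpower r p * exp (- sqrt gamma * r)).

From Stdlib Require Import Reals ZArith Lra Lia.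
From Coquelicot Require Import Coquelicot.
Open Scope R_scope.

(* Write a = r z and B = a'/r for the gauge profile and the magnetic field of the vortex;
   the equation of z says B' = a s^2 / r, and (a B)' = r B^2 + a^2 s^2 / r >= 0.  From this,
   a decreases from n to 0 and n - a >= c min(r^2, 1).

   For the perturbation, y times the first equation minus the derivative of the second gives
   (r s^2 u)' = -2 r s^2 x v, while the second equation reads
   (v/y)' = -(2 y^2 + gamma s^2/2) u / y^2.
   If -2n <= m <= -1, comparing the leading powers r^k at the origin in these two identities
   gives (k+1) v0 = m u0 and (2n+k+1) u0 = (2n+m) v0, which force u0 = v0 = 0 since
   (k+1)(2n+k+1) > 0 >= m(2n+m).  For every other m, x and y have the same sign, so
   Q = r s^2 u v / y is nonincreasing; it tends to 0 at both ends, hence vanishes identically,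
   and so does Q' = -(r s^2 / y^2) (2 x y v^2 + (2 y^2 + gamma s^2/2) u^2), whence u = v = 0
   near the origin.
   Either way u0 = v0 = 0, and the prescribed form u = u0 r^k (1 + o(1)) makes u, v vanish. *)

(** * Limits at 0+ *)

Lemma at_right0_interval (P : R -> Prop) d :
  0 < d -> (forall t, 0 < t < d -> P t) -> at_right 0 P.
Proof.
intros Hd HP. exists (mkposreal d Hd). intros t Ht Ht0. apply HP.
change (Rabs (t - 0) < d) in Ht. rewrite Rminus_0_r, Rabs_pos_eq in Ht; lra.
Qed.

Lemma lim0r_epsilon f l : lim0r f l ->
  forall e, 0 < e -> exists d, 0 < d /\ forall t, 0 < t < d -> Rabs (f t - l) < e.
Proof.
intros H e He.
destruct (H (ball l (mkposreal e He)) (locally_ball l (mkposreal e He))) as [d Hd].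
exists d. split; [apply cond_pos |]. intros t [Ht0 Htd]. apply Hd; [| exact Ht0].
change (Rabs (t - 0) < d). rewrite Rminus_0_r, Rabs_pos_eq; lra.
Qed.

Lemma lim0r_of_epsilon f l :
  (forall e, 0 < e -> exists d, 0 < d /\ forall t, 0 < t < d -> Rabs (f t - l) < e) ->
  lim0r f l.
Proof.
intros H P [e He]. destruct (H e (cond_pos e)) as [d [Hd Hfd]].
apply (at_right0_interval _ d Hd). intros t Ht. apply He, Hfd, Ht.
Qed.

Lemma lim0r_ext f g l d :
  0 < d -> (forall t, 0 < t < d -> f t = g t) -> lim0r f l -> lim0r g l.
Proof. intros Hd Hfg. apply filterlim_ext_loc. exact (at_right0_interval _ d Hd Hfg). Qed.

Lemma lim0r_unique f a b : lim0r f a -> lim0r f b -> a = b.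
Proof.
exact (filterlim_locally_unique (K := R_AbsRing) (V := R_NormedModule) f a b).
Qed.

Lemma lim0r_le f g lf lg d : 0 < d -> (forall t, 0 < t < d -> f t <= g t) ->
  lim0r f lf -> lim0r g lg -> lf <= lg.
Proof.
intros Hd Hfg Hf Hg.
exact (filterlim_le (F := at_right 0) f g lf lg (at_right0_interval _ d Hd Hfg) Hf Hg).
Qed.

Lemma lim0r_const c : lim0r (fun _ => c) c.
Proof. apply filterlim_const. Qed.

Lemma lim0r_id : lim0r (fun t => t) 0.
Proof.
intros P [e He]. apply (at_right0_interval _ e (cond_pos e)). intros t Ht. apply He.
change (Rabs (t - 0) < e). rewrite Rminus_0_r, Rabs_pos_eq; lra.
Qed.

Lemma lim0r_plus f g a b : lim0r f a -> lim0r g b -> lim0r (fun t => f t + g t) (a + b).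
Proof. intros Hf Hg. exact (filterlim_comp_2 f g Rplus Hf Hg (filterlim_plus a b)). Qed.

Lemma lim0r_mult f g a b : lim0r f a -> lim0r g b -> lim0r (fun t => f t * g t) (a * b).
Proof. intros Hf Hg. exact (filterlim_comp_2 f g Rmult Hf Hg (filterlim_mult a b)). Qed.

Lemma lim0r_opp f a : lim0r f a -> lim0r (fun t => - f t) (- a).
Proof. intros Hf. exact (filterlim_comp _ _ _ _ _ _ _ _ Hf (filterlim_opp a)). Qed.

Lemma lim0r_minus f g a b : lim0r f a -> lim0r g b -> lim0r (fun t => f t - g t) (a - b).
Proof. intros Hf Hg. apply lim0r_plus; [exact Hf | exact (lim0r_opp g b Hg)]. Qed.

Lemma lim0r_inv f a : a <> 0 -> lim0r f a -> lim0r (fun t => / f t) (/ a).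
Proof.
intros Ha Hf. eapply filterlim_comp; [exact Hf |].
apply (filterlim_Rbar_inv a). congruence.
Qed.

Lemma lim0r_div f g a b : lim0r f a -> lim0r g b -> b <> 0 -> lim0r (fun t => f t / g t) (a / b).
Proof. intros Hf Hg Hb. exact (lim0r_mult f _ a _ Hf (lim0r_inv g b Hb Hg)). Qed.

Lemma lim0r_pow f a k : lim0r f a -> lim0r (fun t => f t ^ k) (a ^ k).
Proof.
intros Hf. induction k as [| k IH]; [apply lim0r_const | exact (lim0r_mult _ _ _ _ Hf IH)].
Qed.

Lemma Rpower_pos t q : 0 < Rpower t q.
Proof. apply exp_pos. Qed.

Lemma lim0r_Rpower q : 0 < q -> lim0r (fun t => Rpower t q) 0.
Proof.
intros Hq P [e He]. apply (at_right0_interval _ (Rpower e (/ q))); [apply Rpower_pos |].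
intros t [Ht0 Hte]. apply He. change (Rabs (Rpower t q - 0) < e).
rewrite Rminus_0_r, Rabs_pos_eq by apply Rlt_le, Rpower_pos.
rewrite <- (Rpower_1 e) by apply cond_pos. rewrite <- (Rinv_l q) by lra.
rewrite <- Rpower_mult. apply Rlt_Rpower_l; lra.
Qed.

Lemma lim0r_mult_bounded f g M d : 0 < d -> (forall t, 0 < t < d -> Rabs (g t) <= M) ->
  lim0r f 0 -> lim0r (fun t => f t * g t) 0.
Proof.
intros Hd Hg Hf.
assert (Habs : lim0r (fun t => Rabs (f t) * M) 0).
{ rewrite <- (Rmult_0_l M). apply lim0r_mult; [| apply lim0r_const].
  rewrite <- Rabs_R0. exact (filterlim_comp _ _ _ _ _ _ _ _ Hf (filterlim_Rabs 0)). }
apply (filterlim_le_le (F := at_right 0) (fun t => - (Rabs (f t) * M)) _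
  (fun t => Rabs (f t) * M) (Finite 0)).
- apply (at_right0_interval _ d Hd). intros t Ht. apply Rabs_le_between.
  rewrite Rabs_mult. apply Rmult_le_compat_l; [apply Rabs_pos | exact (Hg t Ht)].
- replace (Finite 0) with (Finite (- 0)) by (f_equal; ring). exact (lim0r_opp _ _ Habs).
- exact Habs.
Qed.

Lemma lim0r_zero_near f l d : 0 < d -> (forall t, 0 < t < d -> f t = 0) -> lim0r f l -> l = 0.
Proof.
intros Hd Hf Hl. apply (lim0r_unique f _ _ Hl).
apply (lim0r_ext (fun _ => 0) f 0 d Hd); [intros t Ht; symmetry; apply Hf, Ht | apply lim0r_const].
Qed.

Lemma lim0r_nonzero_near f l : l <> 0 -> lim0r f l ->
  exists d, 0 < d /\ forall t, 0 < t < d -> f t <> 0.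
Proof.
intros Hl Hf. destruct (lim0r_epsilon _ _ Hf (Rabs l)) as [d [Hd H]]; [apply Rabs_pos_lt, Hl |].
exists d. split; [exact Hd |]. intros t Ht Hz. specialize (H t Ht).
rewrite Hz, Rminus_0_l, Rabs_Ropp in H. lra.
Qed.

Lemma lim0r_eq f l l' : lim0r f l -> l = l' -> lim0r f l'.
Proof. intros Hf <-. exact Hf. Qed.

Ltac lim0r_alg :=
  repeat first
    [ eassumption
    | apply lim0r_const
    | apply lim0r_id
    | apply lim0r_minus
    | apply lim0r_plus
    | apply lim0r_opp
    | apply lim0r_div
    | apply lim0r_mult
    | apply lim0r_pow
    | apply lim0r_Rpower ].

(* Proves [lim0r f ?l] for an algebraic combination [f] of functions with known limits,
   leaving the equation between the computed limit and the intended one. *)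
Ltac lim0r_compute := eapply lim0r_eq; [lim0r_alg |].

Lemma lim0r_leading_ratio (w e : R -> R) w0 k : lim0r e 0 ->
  (forall r, 0 < r -> w r = w0 * Rpower r k * (1 + e r)) ->
  lim0r (fun t => w t / Rpower t k) w0.
Proof.
intros He Hw. apply (lim0r_ext (fun t => w0 * (1 + e t)) _ _ 1); [lra | |].
- intros t Ht. rewrite Hw by lra. field. apply Rgt_not_eq, Rpower_pos.
- lim0r_compute. ring.
Qed.

(** * Calculus on intervals *)

Lemma MVT_is_derive (h dh : R -> R) a b : a <= b ->
  (forall t, a <= t <= b -> is_derive h t (dh t)) ->
  exists c, a <= c <= b /\ h b - h a = dh c * (b - a).
Proof.
intros Hab Hd. destruct (Rle_lt_or_eq_dec a b Hab) as [Hlt | <-].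
- destruct (MVT_cor2 h dh a b Hlt) as [c [Hc Hcab]].
  + intros t Ht. apply is_derive_Reals, Hd, Ht.
  + exists c. split; [lra | exact Hc].
- exists a. split; [lra | ring].
Qed.

Lemma nondecr_of_derive (h dh : R -> R) a b : a <= b ->
  (forall t, a <= t <= b -> is_derive h t (dh t)) ->
  (forall t, a <= t <= b -> 0 <= dh t) -> h a <= h b.
Proof.
intros Hab Hd Hpos. destruct (MVT_is_derive h dh a b Hab Hd) as [c [Hc Hh]].
specialize (Hpos c Hc). nra.
Qed.

Lemma nonincr_of_derive (h dh : R -> R) a b : a <= b ->
  (forall t, a <= t <= b -> is_derive h t (dh t)) ->
  (forall t, a <= t <= b -> dh t <= 0) -> h b <= h a.
Proof.
intros Hab Hd Hneg. destruct (MVT_is_derive h dh a b Hab Hd) as [c [Hc Hh]].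
specialize (Hneg c Hc). nra.
Qed.

Lemma incr_of_derive (h dh : R -> R) a b : a < b ->
  (forall t, a <= t <= b -> is_derive h t (dh t)) ->
  (forall t, a <= t <= b -> 0 < dh t) -> h a < h b.
Proof.
intros Hab Hd Hpos. destruct (MVT_is_derive h dh a b (Rlt_le _ _ Hab) Hd) as [c [Hc Hh]].
specialize (Hpos c Hc). nra.
Qed.

Lemma cauchy_MVT (F G dF dG : R -> R) a b : a < b ->
  (forall t, a <= t <= b -> is_derive F t (dF t) /\ is_derive G t (dG t)) ->
  exists c, a <= c <= b /\ (G b - G a) * dF c = (F b - F a) * dG c.
Proof.
intros Hab Hd.
destruct (MVT_is_derive (fun t => (G b - G a) * F t - (F b - F a) * G t)
  (fun t => (G b - G a) * dF t - (F b - F a) * dG t) a b (Rlt_le _ _ Hab)) as [c [Hc Hh]].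
- intros t Ht. destruct (Hd t Ht) as [HF HG].
  apply (is_derive_minus (fun t => (G b - G a) * F t) (fun t => (F b - F a) * G t));
    apply is_derive_scal; assumption.
- exists c. split; [exact Hc |].
  assert (((G b - G a) * dF c - (F b - F a) * dG c) * (b - a) = 0) by (rewrite <- Hh; ring).
  nra.
Qed.

Lemma lhopital_at_right0 (F G dF dG : R -> R) L d : 0 < d ->
  (forall t, 0 < t < d ->
     is_derive F t (dF t) /\ is_derive G t (dG t) /\ dG t <> 0 /\ G t <> 0) ->
  lim0r F 0 -> lim0r G 0 -> lim0r (fun t => dF t / dG t) L ->
  lim0r (fun t => F t / G t) L.
Proof.
intros Hd HD HF HG HL. apply lim0r_of_epsilon. intros e He.
destruct (lim0r_epsilon _ _ HL (e / 2)) as [d1 [Hd1 H1]]; [lra |].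
exists (Rmin d d1). split; [apply Rmin_pos; lra |]. intros t Ht.
pose proof (Rmin_l d d1). pose proof (Rmin_r d d1).
destruct (HD t ltac:(lra)) as [_ [_ [_ HGt]]].
assert (Hsec : lim0r (fun a => (F t - F a) / (G t - G a)) ((F t - 0) / (G t - 0))).
{ lim0r_alg. rewrite Rminus_0_r. exact HGt. }
destruct (lim0r_epsilon _ _ Hsec (e / 2)) as [d2 [Hd2 H2]]; [lra |].
assert (Ha : 0 < Rmin (t / 2) (d2 / 2) < t /\ Rmin (t / 2) (d2 / 2) < d2).
{ pose proof (Rmin_l (t / 2) (d2 / 2)). pose proof (Rmin_r (t / 2) (d2 / 2)).
  pose proof (Rmin_pos (t / 2) (d2 / 2)). lra. }
set (a := Rmin (t / 2) (d2 / 2)) in Ha.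
assert (Hder : forall x, a <= x <= t -> is_derive F x (dF x) /\ is_derive G x (dG x)).
{ intros x Hx. destruct (HD x ltac:(lra)) as [? [? _]]. split; assumption. }
destruct (MVT_is_derive G dG a t ltac:(lra)) as [c' [Hc' HGat]].
{ intros x Hx. apply Hder, Hx. }
assert (HGne : G t - G a <> 0).
{ rewrite HGat. destruct (HD c' ltac:(lra)) as [_ [_ [? _]]].
  apply Rmult_integral_contrapositive. split; lra. }
destruct (cauchy_MVT F G dF dG a t ltac:(lra) Hder) as [c [Hc Hcauchy]].
destruct (HD c ltac:(lra)) as [_ [_ [HdGc _]]].
assert (Hq : (F t - F a) / (G t - G a) = dF c / dG c) by (field_simplify_eq; lra).
specialize (H1 c ltac:(lra)). specialize (H2 a ltac:(lra)).
rewrite !Rminus_0_r, Hq in H2.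
replace (F t / G t - L) with ((F t / G t - dF c / dG c) + (dF c / dG c - L)) by ring.
rewrite Rabs_minus_sym in H2.
pose proof (Rabs_triang (F t / G t - dF c / dG c) (dF c / dG c - L)). lra.
Qed.

Lemma leading_power_derive (F dF : R -> R) p A B d : 0 < p -> 0 < d ->
  (forall t, 0 < t < d -> is_derive F t (dF t)) ->
  lim0r (fun t => F t / Rpower t p) A ->
  lim0r (fun t => dF t / Rpower t (p - 1)) B -> B = p * A.
Proof.
intros Hp Hd HF HA HB.
assert (Hpow : lim0r (fun t => Rpower t p) 0) by exact (lim0r_Rpower p Hp).
assert (HF0 : lim0r F 0).
{ apply (lim0r_ext (fun t => F t / Rpower t p * Rpower t p) _ _ 1); [lra | |].
  - intros t _. field. apply Rgt_not_eq, Rpower_pos.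
  - rewrite <- (Rmult_0_r A). lim0r_alg. }
assert (Hlim : lim0r (fun t => F t / Rpower t p) (B / p)).
{ apply (lhopital_at_right0 F (fun t => Rpower t p) dF (fun t => p * Rpower t (p - 1)) _ d Hd);
    [| exact HF0 | exact Hpow |].
  - intros t Ht. pose proof (Rpower_pos t (p - 1)). pose proof (Rpower_pos t p).
    split; [apply HF, Ht |]. split; [apply is_derive_Reals, derivable_pt_lim_power; lra |].
    split; [nra | lra].
  - apply (lim0r_ext (fun t => dF t / Rpower t (p - 1) / p) _ _ 1); [lra | |].
    + intros t _. field. split; [apply Rgt_not_eq, Rpower_pos | lra].
    + lim0r_alg. lra. }
rewrite (lim0r_unique _ _ _ HA Hlim). field. lra.
Qed.

Lemma Rpower_exp_small q b : 0 < b ->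
  forall e, 0 < e -> exists R0, forall r, R0 < r -> Rpower r q * exp (- b * r) < e.
Proof.
intros Hb e He.
assert (Hq1 : 0 < Rabs q + 1) by (pose proof (Rabs_pos q); lra).
set (lam := b / (2 * (Rabs q + 1))).
assert (Hlam : 0 < lam) by (apply Rdiv_lt_0_compat; lra).
destruct (is_lim_div_ln_p _ (locally_ball 0 (mkposreal _ Hlam))) as [M HM].
exists (Rmax 1 (Rmax M (- 2 * ln e / b))). intros r Hr.
pose proof (Rmax_l 1 (Rmax M (- 2 * ln e / b))). pose proof (Rmax_r 1 (Rmax M (- 2 * ln e / b))).
pose proof (Rmax_l M (- 2 * ln e / b)). pose proof (Rmax_r M (- 2 * ln e / b)).
assert (Hln : ln r <= lam * r).
{ specialize (HM r ltac:(lra)). change (Rabs (ln r / r - 0) < lam) in HM.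
  rewrite Rminus_0_r in HM. apply Rabs_lt_between in HM.
  replace (ln r) with (ln r / r * r) by (field; lra). apply Rmult_le_compat_r; lra. }
assert (Hln0 : 0 <= ln r) by (rewrite <- ln_1; apply ln_le; lra).
assert (Hpow : q * ln r <= b / 2 * r).
{ replace (b / 2 * r) with ((Rabs q + 1) * (lam * r)) by (unfold lam; field; lra).
  apply Rle_trans with (Rabs q * ln r); [apply Rmult_le_compat_r; [lra | apply Rle_abs] |].
  apply Rle_trans with ((Rabs q + 1) * ln r); [lra | apply Rmult_le_compat_l; lra]. }
assert (Hexp : - 2 * ln e < r * b).
{ replace (- 2 * ln e) with (- 2 * ln e / b * b) by (field; lra).
  apply Rmult_lt_compat_r; lra. }
unfold Rpower. rewrite <- exp_plus, <- (exp_ln e He). apply exp_increasing. lra.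
Qed.

Lemma Rpower_exp_decay K q b : 0 < b ->
  forall e, 0 < e -> exists R0, forall r, R0 < r -> K * Rpower r q * exp (- b * r) < e.
Proof.
intros Hb e He. assert (HK : 0 < Rabs K + 1) by (pose proof (Rabs_pos K); lra).
destruct (Rpower_exp_small q b Hb (e / (Rabs K + 1))) as [R0 HR0]; [apply Rdiv_lt_0_compat; lra |].
exists R0. intros r Hr. specialize (HR0 r Hr).
assert (HP : 0 < Rpower r q * exp (- b * r))
  by (apply Rmult_lt_0_compat; [apply Rpower_pos | apply exp_pos]).
rewrite Rmult_assoc.
apply Rle_lt_trans with ((Rabs K + 1) * (Rpower r q * exp (- b * r))).
- pose proof (Rle_abs K). nra.
- replace e with ((Rabs K + 1) * (e / (Rabs K + 1))) by (field; lra).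
  apply Rmult_lt_compat_l; lra.
Qed.

Lemma is_derive_continuity_pt (h : R -> R) (x l : R) : is_derive h x l -> continuity_pt h x.
Proof.
intros Hd. apply continuity_pt_filterlim.
apply (ex_derive_continuous (K := R_AbsRing) (V := R_NormedModule)). exists l. exact Hd.
Qed.

Lemma is_derive_locally_zero (h : R -> R) (dh r : R) : 0 < r ->
  (forall t, 0 < t -> h t = 0) -> is_derive h r dh -> dh = 0.
Proof.
intros Hr Hh Hd. rewrite <- (is_derive_unique _ _ _ Hd).
rewrite (Derive_ext_loc h (fun _ => 0)); [apply Derive_const |].
apply (locally_interval _ r 0 p_infty); simpl; [exact Hr | exact I |].
intros t Ht _. apply Hh, Ht.
Qed.

Lemma nonincr_vanishing_at_ends (h : R -> R) :
  (forall a b, 0 < a <= b -> h b <= h a) -> lim0r h 0 ->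
  (forall e, 0 < e -> exists R0, forall r, R0 < r -> Rabs (h r) < e) ->
  forall t, 0 < t -> h t = 0.
Proof.
intros Hmono H0 Hinf t Ht. apply Rle_antisym.
- apply (lim0r_le (fun _ => h t) h (h t) 0 t Ht); [| apply lim0r_const | exact H0].
  intros a Ha. apply Hmono. lra.
- apply Rnot_lt_le. intros Hneg. destruct (Hinf (- h t)) as [R0 HR0]; [lra |].
  set (b := Rmax R0 t + 1). pose proof (Rmax_l R0 t). pose proof (Rmax_r R0 t).
  specialize (HR0 b ltac:(unfold b; lra)). apply Rabs_lt_between in HR0.
  pose proof (Hmono t b ltac:(unfold b; lra)). lra.
Qed.

(** * The Nielsen-Olesen profile *)

(* [apot z] is the gauge profile a = r z of the vortex, [bfield z] its magnetic field B = a'/r. *)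
Definition apot (z : R -> R) (r : R) : R := r * z r.
Definition bfield (z : R -> R) (r : R) : R := z r / r + Derive z r.

Section Vortex.

Variables (n : nat) (beta : R) (s z : R -> R).
Hypothesis HNO : NO_profile n beta s z.

Lemma apot_derive r : 0 < r -> is_derive (apot z) r (r * bfield z r).
Proof.
intros Hr. destruct HNO as [HD _]. destruct (HD r Hr) as [_ [_ [Hz _]]].
unfold apot, bfield. auto_derive; [exact Hz |].
change (Derive (fun x => z x) r) with (Derive z r). field. lra.
Qed.

Lemma bfield_derive r : 0 < r -> is_derive (bfield z) r (apot z r / r * s r ^ 2).
Proof.
intros Hr. destruct HNO as [HD [_ [Hzeq _]]]. destruct (HD r Hr) as [_ [_ [Hz Hz']]].
specialize (Hzeq r Hr). unfold apot, bfield. auto_derive; [repeat split; auto; lra |].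
change (Derive (fun x => z x) r) with (Derive z r).
change (Derive (fun x => Derive z x) r) with (Derive (Derive z) r).
apply (Rmult_eq_reg_r (r ^ 2)); [| apply pow_nonzero; lra].
rewrite <- (Rminus_0_r (_ * r ^ 2)), <- (Rmult_0_l (r ^ 2)), <- Hzeq. field. lra.
Qed.

Lemma apot_bfield_nondecr a b : 0 < a <= b -> apot z a * bfield z a <= apot z b * bfield z b.
Proof.
intros Hab.
apply (nondecr_of_derive (fun t => apot z t * bfield z t)
  (fun t => t * bfield z t ^ 2 + apot z t ^ 2 / t * s t ^ 2) a b); [lra | |].
- intros t Ht.
  replace (t * bfield z t ^ 2 + apot z t ^ 2 / t * s t ^ 2)
    with ((t * bfield z t) * bfield z t + apot z t * (apot z t / t * s t ^ 2)) by (field; lra).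
  apply (is_derive_mult (apot z) (bfield z));
    [apply apot_derive; lra | apply bfield_derive; lra | intros; apply Rmult_comm].
- intros t Ht. pose proof (pow2_ge_0 (bfield z t)). pose proof (pow2_ge_0 (apot z t)).
  pose proof (pow2_ge_0 (s t)).
  assert (0 <= apot z t ^ 2 / t) by (apply Rdiv_le_0_compat; lra). nra.
Qed.

Lemma apot_lim0 : lim0r (apot z) (INR n).
Proof.
destruct HNO as [_ [_ [_ [_ [[z0 [eps [Heps Hz]]] _]]]]].
apply (lim0r_ext (fun r => INR n + r * r * (z0 + eps r)) _ _ 1); [lra | |].
- intros t Ht. unfold apot. rewrite Hz by lra. field. lra.
- lim0r_compute. ring.
Qed.

Lemma apot_decay e : 0 < e -> exists R0, forall r, R0 < r -> Rabs (apot z r) < e.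
Proof.
intros He. destruct HNO as [_ [_ [_ [_ [_ [C [a [R0 [Ha Hdecay]]]]]]]]].
destruct (Rpower_exp_decay C 1 a Ha e He) as [R1 HR1].
exists (Rmax (Rmax R0 R1) 0). intros r Hr.
pose proof (Rmax_l (Rmax R0 R1) 0). pose proof (Rmax_r (Rmax R0 R1) 0).
pose proof (Rmax_l R0 R1). pose proof (Rmax_r R0 R1).
specialize (HR1 r ltac:(lra)). rewrite Rpower_1 in HR1 by lra.
destruct (Hdecay r ltac:(lra)) as [_ Hz].
unfold apot. rewrite Rabs_mult, (Rabs_pos_eq r) by lra. nra.
Qed.

Lemma s_leading : exists s0, s0 <> 0 /\ lim0r (fun r => s r / r ^ n) s0.
Proof.
destruct HNO as [_ [_ [_ [[s0 [eps [Heps Hs]]] [_ [C [a [R0 [Ha Hdecay]]]]]]]]].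
exists s0. split.
- intros Hs0. destruct (Rpower_exp_decay C 0 a Ha 1 Rlt_0_1) as [R1 HR1].
  set (r := Rmax (Rmax R0 R1) 0 + 1).
  pose proof (Rmax_l (Rmax R0 R1) 0). pose proof (Rmax_r (Rmax R0 R1) 0).
  pose proof (Rmax_l R0 R1). pose proof (Rmax_r R0 R1).
  specialize (HR1 r ltac:(unfold r; lra)). rewrite Rpower_O in HR1 by (unfold r; lra).
  destruct (Hdecay r ltac:(unfold r; lra)) as [Hs1 _].
  rewrite Hs, Hs0 in Hs1 by (unfold r; lra).
  rewrite !Rmult_0_l, Rminus_0_l, Rabs_Ropp, Rabs_R1 in Hs1. lra.
- apply (lim0r_ext (fun r => s0 * (1 + eps r)) _ _ 1); [lra | |].
  + intros t Ht. rewrite Hs by lra. field. apply pow_nonzero. lra.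
  + lim0r_compute. ring.
Qed.

Lemma rs_lim0 : lim0r (fun r => r * s r) 0.
Proof.
destruct s_leading as [s0 [_ Hs]].
apply (lim0r_ext (fun r => r ^ S n * (s r / r ^ n)) _ _ 1); [lra | |].
- intros t Ht. simpl. field. apply pow_nonzero. lra.
- lim0r_compute. simpl. ring.
Qed.

Lemma s_bounded : exists S R0, forall r, R0 < r -> Rabs (s r) <= S.
Proof.
destruct HNO as [_ [_ [_ [_ [_ [C [a [R0 [Ha Hdecay]]]]]]]]].
exists (1 + Rabs C), (Rmax R0 0). intros r Hr.
pose proof (Rmax_l R0 0). pose proof (Rmax_r R0 0).
destruct (Hdecay r ltac:(lra)) as [Hs _].
assert (Hexp : exp (- a * r) <= 1) by (rewrite <- exp_0; apply Rlt_le, exp_increasing; nra).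
pose proof (exp_pos (- a * r)). pose proof (Rle_abs C). pose proof (Rabs_pos C).
pose proof (Rabs_triang (s r - 1) 1) as Htri. rewrite Rabs_R1 in Htri.
replace (s r - 1 + 1) with (s r) in Htri by ring. nra.
Qed.

Hypothesis Hn : (1 <= n)%nat.

Let INR_n_pos : 0 < INR n.
Proof. apply lt_0_INR. lia. Qed.

(* If a(r) < 0, then a vanishes at some t0 < r; as a B is nondecreasing, a B >= 0 after t0, so
   (a^2)' = 2 r a B >= 0 there and a^2 stays >= a(r)^2 > 0, against a -> 0 at infinity. *)
Lemma apot_nonneg r : 0 < r -> 0 <= apot z r.
Proof.
intros Hr. apply Rnot_lt_le. intros Hneg.
destruct (lim0r_epsilon _ _ apot_lim0 (INR n) INR_n_pos) as [d [Hd Hnear]].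
assert (He0 : 0 < Rmin d r / 2 < r /\ Rmin d r / 2 < d).
{ pose proof (Rmin_l d r). pose proof (Rmin_r d r). pose proof (Rmin_pos d r Hd Hr). lra. }
set (e0 := Rmin d r / 2) in He0.
assert (Ha0 : 0 < apot z e0).
{ specialize (Hnear e0 ltac:(lra)). apply Rabs_lt_between in Hnear. lra. }
destruct (Ranalysis5.IVT_interv (fun t => - apot z t) e0 r) as [t0 [Ht0 Hzero]];
  [| lra | lra | lra |].
{ intros t Ht. apply (is_derive_continuity_pt _ _ (- (t * bfield z t))).
  apply (is_derive_opp (apot z)), apot_derive. lra. }
assert (HaB : forall t, t0 <= t -> 0 <= apot z t * bfield z t).
{ intros t Ht. replace 0 with (apot z t0 * bfield z t0)
    by (rewrite <- (Ropp_involutive (apot z t0)), Hzero; ring).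
  apply apot_bfield_nondecr. lra. }
assert (Hsq : forall t, r <= t -> apot z r ^ 2 <= apot z t ^ 2).
{ intros t Ht.
  apply (nondecr_of_derive (fun x => apot z x ^ 2) (fun x => 2 * x * (apot z x * bfield z x)));
    [exact Ht | |].
  - intros x Hx. replace (2 * x * (apot z x * bfield z x))
      with (INR 2 * (x * bfield z x) * apot z x ^ Nat.pred 2) by (simpl; ring).
    apply (is_derive_pow (apot z)), apot_derive. lra.
  - intros x Hx. specialize (HaB x ltac:(lra)). nra. }
destruct (apot_decay (- apot z r)) as [R0 HR0]; [lra |].
set (t := Rmax R0 r + 1). pose proof (Rmax_l R0 r). pose proof (Rmax_r R0 r).
specialize (HR0 t ltac:(unfold t; lra)). specialize (Hsq t ltac:(unfold t; lra)).
apply Rabs_lt_between in HR0. nra.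
Qed.

Lemma bfield_nondecr a b : 0 < a <= b -> bfield z a <= bfield z b.
Proof.
intros Hab. apply (nondecr_of_derive _ (fun t => apot z t / t * s t ^ 2)); [lra | |].
- intros t Ht. apply bfield_derive. lra.
- intros t Ht. pose proof (apot_nonneg t ltac:(lra)). pose proof (pow2_ge_0 (s t)).
  assert (0 <= apot z t / t) by (apply Rdiv_le_0_compat; lra). nra.
Qed.

Lemma bfield_nonpos r : 0 < r -> bfield z r <= 0.
Proof.
intros Hr. apply Rnot_lt_le. intros Hpos.
set (c := r * bfield z r). assert (Hc : 0 < c) by (unfold c; nra).
assert (Hlin : forall t, r <= t -> apot z r - c * r <= apot z t - c * t).
{ intros t Ht.
  apply (nondecr_of_derive (fun x => apot z x - c * x) (fun x => x * bfield z x - c));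
    [exact Ht | |].
  - intros x Hx. apply (is_derive_minus (apot z) (fun x => c * x));
      [apply apot_derive; lra | auto_derive; [exact I | ring]].
  - intros x Hx. pose proof (bfield_nondecr r x ltac:(lra)). unfold c. nra. }
destruct (apot_decay 1) as [R0 HR0]; [lra |].
set (t := Rmax R0 r + 1 + / c). pose proof (Rmax_l R0 r). pose proof (Rmax_r R0 r).
pose proof (Rinv_0_lt_compat c Hc).
specialize (HR0 t ltac:(unfold t; lra)). specialize (Hlin t ltac:(unfold t; lra)).
apply Rabs_lt_between in HR0. pose proof (apot_nonneg r Hr).
assert (c * (t - r) >= 1 + c).
{ assert (c * (1 + / c) = c + 1) by (field; lra). unfold t. nra. }
lra.
Qed.

Lemma apot_nonincr a b : 0 < a <= b -> apot z b <= apot z a.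
Proof.
intros Hab. apply (nonincr_of_derive _ (fun t => t * bfield z t)); [lra | |].
- intros t Ht. apply apot_derive. lra.
- intros t Ht. pose proof (bfield_nonpos t ltac:(lra)). nra.
Qed.

Lemma bfield_neg_near0 : exists r1, 0 < r1 <= 1 / 2 /\ bfield z r1 < 0.
Proof.
destruct s_leading as [s0 [Hs0 Hs]].
destruct (lim0r_nonzero_near _ _ Hs0 Hs) as [d1 [Hd1 Hsnz]].
destruct (lim0r_epsilon _ _ apot_lim0 (INR n / 2)) as [d2 [Hd2 Ha2]]; [lra |].
pose proof (Rmin_l 1 (Rmin d1 d2)). pose proof (Rmin_r 1 (Rmin d1 d2)).
pose proof (Rmin_l d1 d2). pose proof (Rmin_r d1 d2).
assert (Hrho : 0 < Rmin 1 (Rmin d1 d2)) by (apply Rmin_pos; [lra | apply Rmin_pos; lra]).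
set (rho := Rmin 1 (Rmin d1 d2)) in *.
exists (rho / 2). split; [lra |].
apply Rlt_le_trans with (bfield z (3 * rho / 4)); [| apply bfield_nonpos; lra].
apply (incr_of_derive _ (fun t => apot z t / t * s t ^ 2)); [lra | |].
- intros t Ht. apply bfield_derive. lra.
- intros t Ht. specialize (Ha2 t ltac:(lra)). apply Rabs_lt_between in Ha2.
  assert (Hst : s t <> 0) by (intros E; apply (Hsnz t ltac:(lra)); rewrite E; unfold Rdiv; ring).
  pose proof (pow2_gt_0 _ Hst).
  assert (0 < apot z t / t) by (apply Rdiv_lt_0_compat; lra). nra.
Qed.

(* a + b r^2 with b = -B(r1)/2 is nonincreasing on (0, r1], where B <= B(r1), and tends to n. *)
Lemma apot_gap_near0 r1 r : 0 < r <= r1 -> - bfield z r1 / 2 * r ^ 2 <= INR n - apot z r.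
Proof.
intros Hr. set (b := - bfield z r1 / 2).
assert (apot z r + b * r ^ 2 <= INR n); [| lra].
apply (lim0r_le (fun t => apot z r + b * r ^ 2) (fun t => apot z t + b * t ^ 2) _ _ r);
  [lra | | apply lim0r_const |].
- intros t Ht.
  apply (nonincr_of_derive (fun x => apot z x + b * x ^ 2) (fun x => x * bfield z x + 2 * b * x));
    [lra | |].
  + intros x Hx. apply (is_derive_plus (apot z) (fun x => b * x ^ 2)); [apply apot_derive; lra |].
    auto_derive; [exact I | ring].
  + intros x Hx. pose proof (bfield_nondecr x r1 ltac:(lra)). unfold b. nra.
- pose proof apot_lim0. lim0r_compute. ring.
Qed.

Lemma apot_gap : exists dl, 0 < dl /\
  forall r, 0 < r -> dl * Rmin (r ^ 2) 1 <= INR n - apot z r.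
Proof.
destruct bfield_neg_near0 as [r1 [Hr1 HB1]].
set (b := - bfield z r1 / 2). assert (Hb : 0 < b) by (unfold b; lra).
exists (b * r1 ^ 2). split; [apply Rmult_lt_0_compat; [lra | apply pow_lt; lra] |].
intros r Hr.
assert (Hm : 0 <= Rmin (r ^ 2) 1 <= r ^ 2 /\ Rmin (r ^ 2) 1 <= 1).
{ split; [split; [apply Rmin_glb; [apply pow2_ge_0 | lra] | apply Rmin_l] | apply Rmin_r]. }
assert (Hr1sq : 0 < r1 ^ 2 <= 1) by (split; [apply pow_lt | simpl]; nra).
rewrite Rmult_assoc.
destruct (Rle_lt_dec r r1) as [Hle | Hgt].
- pose proof (apot_gap_near0 r1 r (conj Hr Hle)) as Hgap.
  assert (r1 ^ 2 * Rmin (r ^ 2) 1 <= r ^ 2) by nra.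
  apply Rle_trans with (b * r ^ 2); [apply Rmult_le_compat_l; lra | exact Hgap].
- pose proof (apot_gap_near0 r1 r1 (conj (proj1 Hr1) (Rle_refl r1))) as Hgap.
  pose proof (apot_nonincr r1 r ltac:(lra)).
  assert (r1 ^ 2 * Rmin (r ^ 2) 1 <= r1 ^ 2) by nra.
  apply Rle_trans with (b * r1 ^ 2); [apply Rmult_le_compat_l; lra | unfold b in *; lra].
Qed.

End Vortex.

(** * The linearized W equations *)

(* [y] times the first equation, minus the derivative of the second, minus the second
   divided by [r], minus [g V0] times the equation of [z]. *)
Lemma linearized_combination (g K r V0 V1 V2 U0 U1 S0 S1 Z0 Z1 Z2 : R) : 0 < r -> 0 < g ->
  let Y0 := g * Z0 - K / (2 * r) in
  let Y1 := g * Z1 + K / (2 * r ^ 2) in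
  let Y2 := g * Z2 - K / r ^ 3 in
  let X0 := (g - 1) * Z0 - K / (2 * r) in
  V2 + V1 / r - V0 / r ^ 2 + 2 * (2 * Y1 * U0 + Y0 * U1 + Y0 * U0 / r) - g * V0 * S0 ^ 2 = 0 ->
  V1 * Y0 - V0 * Y1 + (2 * Y0 ^ 2 + g / 2 * S0 ^ 2) * U0 = 0 ->
  V2 * Y0 - V0 * Y2 + (4 * Y0 * Y1 + g * S0 * S1) * U0
    + (2 * Y0 ^ 2 + g / 2 * S0 ^ 2) * U1 = 0 ->
  Z2 + Z1 / r - Z0 / r ^ 2 - Z0 * S0 ^ 2 = 0 ->
  S0 ^ 2 * U0 + r * (2 * S0 * S1) * U0 + r * S0 ^ 2 * U1 = -2 * r * S0 ^ 2 * X0 * V0.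
Proof.
intros Hr Hg Y0 Y1 Y2 X0 E1 E2 E2' EZ.
set (D := S0 ^ 2 * U0 + r * (2 * S0 * S1) * U0 + r * S0 ^ 2 * U1).
assert (H : - (g / (2 * r)) * (D + 2 * r * S0 ^ 2 * X0 * V0) =
  Y0 * (V2 + V1 / r - V0 / r ^ 2 + 2 * (2 * Y1 * U0 + Y0 * U1 + Y0 * U0 / r) - g * V0 * S0 ^ 2)
  - (V2 * Y0 - V0 * Y2 + (4 * Y0 * Y1 + g * S0 * S1) * U0 + (2 * Y0 ^ 2 + g / 2 * S0 ^ 2) * U1)
  - (V1 * Y0 - V0 * Y1 + (2 * Y0 ^ 2 + g / 2 * S0 ^ 2) * U0) / r
  - g * V0 * (Z2 + Z1 / r - Z0 / r ^ 2 - Z0 * S0 ^ 2)).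
{ unfold D, Y0, Y1, Y2, X0. field. lra. }
rewrite E1, E2, E2', EZ in H.
assert (Hpos : 0 < g / (2 * r)) by (apply Rdiv_lt_0_compat; lra).
assert (HD : D + 2 * r * S0 ^ 2 * X0 * V0 = 0).
{ apply (Rmult_eq_reg_l (- (g / (2 * r)))); [rewrite H; field | ]; lra. }
lra.
Qed.

Definition Qfun (gamma : R) (n : nat) (m : Z) (s z u v : R -> R) (t : R) : R :=
  t * s t ^ 2 * u t * (v t / yfun gamma n m z t).

Section Perturbation.

Variables (gamma : R) (n : nat) (m : Z) (beta : R) (s z u v : R -> R).
Hypothesis Hgamma : 0 < gamma <= 1.
Hypothesis HNO : NO_profile n beta s z.
Hypothesis HW : W_perturbation gamma n m s z u v.

Local Notation y := (yfun gamma n m z).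
Local Notation x := (xfun gamma n m z).
Local Notation Q := (Qfun gamma n m s z u v).

Lemma yfun_derive r : 0 < r ->
  is_derive y r (gamma * Derive z r + (2 * gamma * INR n + IZR m) / (2 * r ^ 2)).
Proof.
intros Hr. destruct HNO as [HD _]. destruct (HD r Hr) as [_ [_ [Hz _]]].
unfold yfun. auto_derive; [repeat split; auto; lra |].
change (Derive (fun w => z w) r) with (Derive z r). field. lra.
Qed.

Lemma yfun_derive2 r : 0 < r ->
  is_derive (Derive y) r (gamma * Derive (Derive z) r - (2 * gamma * INR n + IZR m) / r ^ 3).
Proof.
intros Hr. destruct HNO as [HD _]. destruct (HD r Hr) as [_ [_ [_ Hz']]].
apply (is_derive_ext_loc
  (fun t => gamma * Derive z t + (2 * gamma * INR n + IZR m) / (2 * t ^ 2))).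
- apply (locally_interval _ r 0 p_infty); [exact Hr | exact I |].
  intros t Ht _. symmetry. apply is_derive_unique, yfun_derive, Ht.
- auto_derive; [repeat split; auto; nra |].
  change (Derive (fun w => Derive z w) r) with (Derive (Derive z) r). field. lra.
Qed.

Lemma rs2u_derive r : 0 < r ->
  is_derive (fun t => t * s t ^ 2 * u t) r (-2 * r * s r ^ 2 * x r * v r).
Proof.
intros Hr. pose proof HNO as [HD [_ [Hzeq _]]]. pose proof HW as [HWD [HE1 [HE2 _]]].
destruct (HD r Hr) as [Hs [_ [Hz _]]]. destruct (HWD r Hr) as [Hu [Hv Hv']].
assert (Hy : ex_derive y r) by (eexists; apply yfun_derive, Hr).
assert (Hy' : ex_derive (Derive y) r) by (eexists; apply yfun_derive2, Hr).
assert (HE2' : Derive (Derive v) r * y r - v r * Derive (Derive y) r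
    + (4 * y r * Derive y r + gamma * s r * Derive s r) * u r
    + (2 * y r ^ 2 + gamma / 2 * s r ^ 2) * Derive u r = 0).
{ apply (is_derive_locally_zero (fun t => Derive v t * y t - v t * Derive y t
    + (2 * y t ^ 2 + gamma / 2 * s t ^ 2) * u t) _ r Hr HE2).
  auto_derive; [repeat split; assumption |].
  change (Derive (fun w => Derive v w) r) with (Derive (Derive v) r).
  change (Derive (fun w => Derive y w) r) with (Derive (Derive y) r).
  change (Derive (fun w => v w) r) with (Derive v r).
  change (Derive (fun w => y w) r) with (Derive y r).
  change (Derive (fun w => s w) r) with (Derive s r).
  change (Derive (fun w => u w) r) with (Derive u r). field. }
specialize (HE1 r Hr). specialize (HE2 r Hr).
rewrite (is_derive_unique _ _ _ (yfun_derive r Hr)) in HE1, HE2, HE2'.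
rewrite (is_derive_unique _ _ _ (yfun_derive2 r Hr)) in HE2'.
pose proof (linearized_combination gamma (2 * gamma * INR n + IZR m) r (v r) (Derive v r)
  (Derive (Derive v) r) (u r) (Derive u r) (s r) (Derive s r) (z r) (Derive z r)
  (Derive (Derive z) r) Hr (proj1 Hgamma) HE1 HE2 HE2' (Hzeq r Hr)) as Hcomb.
auto_derive; [repeat split; assumption |].
change (Derive (fun w => s w) r) with (Derive s r).
change (Derive (fun w => u w) r) with (Derive u r).
transitivity (s r ^ 2 * u r + r * (2 * s r * Derive s r) * u r + r * s r ^ 2 * Derive u r);
  [ring | exact Hcomb].
Qed.

Lemma v_over_y_derive r : 0 < r -> y r <> 0 ->
  is_derive (fun t => v t / y t) r (- (2 * y r ^ 2 + gamma / 2 * s r ^ 2) * u r / y r ^ 2).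
Proof.
intros Hr Hy0. pose proof HW as [HWD [_ [HE2 _]]]. destruct (HWD r Hr) as [_ [Hv _]].
assert (Hy : ex_derive y r) by (eexists; apply yfun_derive, Hr).
specialize (HE2 r Hr).
auto_derive; [repeat split; assumption |].
change (Derive (fun w => v w) r) with (Derive v r).
change (Derive (fun w => y w) r) with (Derive y r).
replace (Derive v r) with ((v r * Derive y r - (2 * y r ^ 2 + gamma / 2 * s r ^ 2) * u r) / y r).
- field. exact Hy0.
- field_simplify_eq; [lra | exact Hy0].
Qed.

Lemma ty_apot t : 0 < t -> t * y t = gamma * apot z t - (2 * gamma * INR n + IZR m) / 2.
Proof. intros Ht. unfold yfun, apot. field. lra. Qed.

Lemma tx_apot t : 0 < t -> t * x t = (gamma - 1) * apot z t - (2 * gamma * INR n + IZR m) / 2.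
Proof. intros Ht. unfold xfun, apot. field. lra. Qed.

Variables (k u0 v0 : R).
Hypothesis Hk : -1/2 < k.
Hypothesis Hu : lim0r (fun t => u t / Rpower t k) u0.
Hypothesis Hv : lim0r (fun t => v t / Rpower t k) v0.

Lemma indicial_v_over_y : IZR m <> 0 -> (k + 1) * v0 = IZR m * u0.
Proof.
intros Hm.
assert (Hty : lim0r (fun t => t * y t) (- IZR m / 2)).
{ apply (lim0r_ext (fun t => gamma * apot z t - (2 * gamma * INR n + IZR m) / 2) _ _ 1);
    [lra | intros t Ht; symmetry; apply ty_apot; lra |].
  pose proof (apot_lim0 n beta s z HNO). lim0r_compute. field. }
destruct (lim0r_nonzero_near _ (- IZR m / 2) ltac:(intros E; apply Hm; lra) Hty) as [d [Hd Hty0]].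
assert (Hy0 : forall t, 0 < t < d -> y t <> 0).
{ intros t Ht E. apply (Hty0 t Ht). rewrite E. ring. }
pose proof (rs_lim0 n beta s z HNO) as Hrs.
assert (Hlead : -2 * u0 = (k + 1) * (v0 / (- IZR m / 2))).
{ apply (leading_power_derive (fun t => v t / y t)
    (fun t => - (2 * y t ^ 2 + gamma / 2 * s t ^ 2) * u t / y t ^ 2) _ _ _ d);
    [lra | exact Hd | | |].
  - intros t Ht. apply v_over_y_derive; [lra | exact (Hy0 t Ht)].
  - apply (lim0r_ext (fun t => v t / Rpower t k / (t * y t)) _ _ d Hd).
    + intros t Ht. pose proof (Rpower_pos t k). pose proof (Hy0 t Ht).
      rewrite Rpower_plus, Rpower_1 by lra. field. repeat split; lra.
    + lim0r_compute; [intros E; apply Hm; lra | reflexivity].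
  - apply (lim0r_ext (fun t => - (2 + gamma / 2 * (t * s t) ^ 2 / (t * y t) ^ 2)
        * (u t / Rpower t k)) _ _ d Hd).
    + intros t Ht. pose proof (Rpower_pos t k). pose proof (Hy0 t Ht).
      replace (k + 1 - 1) with k by ring. field. repeat split; lra.
    + lim0r_compute; [intros E; apply Hm; nra | field; intros E; apply Hm; lra]. }
replace ((k + 1) * v0) with ((k + 1) * (v0 / (- IZR m / 2)) * (- IZR m / 2))
  by (field; intros E; apply Hm; lra).
rewrite <- Hlead. field.
Qed.

Lemma indicial_rs2u : (2 * INR n + k + 1) * u0 = (2 * INR n + IZR m) * v0.
Proof.
destruct (s_leading n beta s z HNO) as [s0 [Hs0 Hs]].
assert (Htx : lim0r (fun t => t * x t) (- INR n - IZR m / 2)).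
{ apply (lim0r_ext (fun t => (gamma - 1) * apot z t - (2 * gamma * INR n + IZR m) / 2) _ _ 1);
    [lra | intros t Ht; symmetry; apply tx_apot; lra |].
  pose proof (apot_lim0 n beta s z HNO). lim0r_compute. field. }
assert (Hpow : forall t, 0 < t -> Rpower t (2 * INR n + k) = (t ^ n) ^ 2 * Rpower t k).
{ intros t Ht. replace (2 * INR n + k) with (INR n + (INR n + k)) by ring.
  rewrite !Rpower_plus, !Rpower_pow by exact Ht. ring. }
assert (Hlead : -2 * s0 ^ 2 * (- INR n - IZR m / 2) * v0 = (2 * INR n + k + 1) * (s0 ^ 2 * u0)).
{ pose proof (pos_INR n).
  apply (leading_power_derive (fun t => t * s t ^ 2 * u t)
    (fun t => -2 * t * s t ^ 2 * x t * v t) _ _ _ 1); [lra | lra | | |].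
  - intros t Ht. apply rs2u_derive. lra.
  - apply (lim0r_ext (fun t => (s t / t ^ n) ^ 2 * (u t / Rpower t k)) _ _ 1); [lra | |].
    + intros t Ht. pose proof (Rpower_pos t k). assert (0 < t ^ n) by (apply pow_lt; lra).
      rewrite Rpower_plus, Rpower_1, Hpow by lra. field. repeat split; lra.
    + lim0r_compute. reflexivity.
  - apply (lim0r_ext (fun t => -2 * (s t / t ^ n) ^ 2 * (t * x t) * (v t / Rpower t k)) _ _ 1);
      [lra | |].
    + intros t Ht. pose proof (Rpower_pos t k). assert (0 < t ^ n) by (apply pow_lt; lra).
      replace (2 * INR n + k + 1 - 1) with (2 * INR n + k) by ring.
      rewrite Hpow by lra. field. repeat split; lra.
    + lim0r_compute. reflexivity. }
apply (Rmult_eq_reg_r (s0 ^ 2)); [| apply pow_nonzero, Hs0].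
transitivity ((2 * INR n + k + 1) * (s0 ^ 2 * u0)); [ring | rewrite <- Hlead; field].
Qed.

Lemma leading_coeffs_zero_indicial : (-2 * Z.of_nat n <= m <= -1)%Z -> u0 = 0 /\ v0 = 0.
Proof.
intros [Hlo Hhi]. apply IZR_le in Hlo, Hhi.
rewrite mult_IZR, <- INR_IZR_INZ in Hlo.
pose proof (indicial_v_over_y ltac:(lra)) as E1. pose proof indicial_rs2u as E2.
pose proof (pos_INR n).
assert (Hu0 : u0 * ((k + 1) * (2 * INR n + k + 1) - IZR m * (2 * INR n + IZR m)) = 0).
{ transitivity ((k + 1) * ((2 * INR n + k + 1) * u0) - (2 * INR n + IZR m) * (IZR m * u0));
    [ring | rewrite E2, <- E1; ring]. }
assert (0 < (k + 1) * (2 * INR n + k + 1) - IZR m * (2 * INR n + IZR m)) by nra.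
assert (u0 = 0) by nra. split; [assumption | nra].
Qed.

Hypothesis Hn : (1 <= n)%nat.
Hypothesis Hout : (m = 0 \/ 1 <= m \/ m <= -2 * Z.of_nat n - 1)%Z.

Lemma txy_bounds : exists c, 0 < c /\ forall t, 0 < t ->
  c * Rmin (t ^ 2) 1 <= Rabs (t * y t) /\ 0 < t * x t * (t * y t).
Proof.
destruct (apot_gap n beta s z HNO Hn) as [dl [Hdl Hgap]].
assert (Hc : 0 < Rmin (gamma * dl) (1 / 2)) by (apply Rmin_pos; nra).
exists (Rmin (gamma * dl) (1 / 2)). split; [exact Hc |]. intros t Ht.
rewrite ty_apot, tx_apot by exact Ht.
pose proof (Hgap t Ht) as Hgt. pose proof (apot_nonneg n beta s z HNO Hn t Ht) as Ha.
assert (Hmu : 0 < Rmin (t ^ 2) 1 <= 1)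
  by (split; [apply Rmin_pos; [apply pow_lt |]; lra | apply Rmin_r]).
pose proof (Rmin_l (gamma * dl) (1 / 2)). pose proof (Rmin_r (gamma * dl) (1 / 2)).
pose proof (pos_INR n). assert (1 <= INR n) by (apply (le_INR 1); exact Hn).
set (A := apot z t) in *. set (c := Rmin (gamma * dl) (1 / 2)) in *.
set (mu := Rmin (t ^ 2) 1) in *.
assert (HAn : A <= INR n) by nra.
assert (HgA : 0 <= gamma * A <= gamma * INR n)
  by (split; [apply Rmult_le_pos | apply Rmult_le_compat_l]; lra).
assert (HgA1 : (gamma - 1) * INR n <= (gamma - 1) * A <= 0)
  by (split; [apply Rmult_le_compat_neg_l | nra]; lra).
assert (Hgn : gamma * INR n <= INR n) by nra.
assert (Hcmu : c * mu <= 1 / 2) by nra.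
destruct Hout as [-> | [Hm | Hm]]; [| apply IZR_le in Hm | apply IZR_le in Hm].
- change (IZR 0) with 0.
  assert (Hgap' : gamma * (dl * mu) <= gamma * (INR n - A)) by (apply Rmult_le_compat_l; lra).
  assert (0 < gamma * (dl * mu)) by (apply Rmult_lt_0_compat; nra).
  assert (HX : (gamma - 1) * A - (2 * gamma * INR n + 0) / 2 < 0) by nra.
  replace (gamma * A - (2 * gamma * INR n + 0) / 2) with (- (gamma * (INR n - A))) by field.
  rewrite Rabs_left by lra. split; [| nra].
  apply Rle_trans with (gamma * dl * mu); [apply Rmult_le_compat_r; lra | lra].
- rewrite Rabs_left by lra. split; [lra | nra].
- rewrite minus_IZR, mult_IZR, <- INR_IZR_INZ in Hm.
  rewrite Rabs_right by lra. split; [lra | nra].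
Qed.

Lemma xy_pos t : 0 < t -> 0 < x t * y t.
Proof.
intros Ht. destruct txy_bounds as [c [_ Hc]]. destruct (Hc t Ht) as [_ H].
replace (t * x t * (t * y t)) with (t ^ 2 * (x t * y t)) in H by ring.
pose proof (pow_lt t 2 Ht). nra.
Qed.

Lemma y_nonzero t : 0 < t -> y t <> 0.
Proof. intros Ht E. pose proof (xy_pos t Ht) as H. rewrite E, Rmult_0_r in H. lra. Qed.

Lemma Q_derive t : 0 < t -> is_derive Q t (- (t * s t ^ 2 / y t ^ 2)
  * (2 * (x t * y t) * v t ^ 2 + (2 * y t ^ 2 + gamma / 2 * s t ^ 2) * u t ^ 2)).
Proof.
intros Ht. pose proof (y_nonzero t Ht) as Hy.
replace (- (t * s t ^ 2 / y t ^ 2)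
    * (2 * (x t * y t) * v t ^ 2 + (2 * y t ^ 2 + gamma / 2 * s t ^ 2) * u t ^ 2))
  with (-2 * t * s t ^ 2 * x t * v t * (v t / y t)
    + t * s t ^ 2 * u t * (- (2 * y t ^ 2 + gamma / 2 * s t ^ 2) * u t / y t ^ 2))
  by (field; exact Hy).
apply (is_derive_mult (fun t => t * s t ^ 2 * u t) (fun t => v t / y t));
  [apply rs2u_derive, Ht | apply v_over_y_derive; assumption | intros; apply Rmult_comm].
Qed.

Lemma Q_nonincr a b : 0 < a <= b -> Q b <= Q a.
Proof.
intros Hab. apply (nonincr_of_derive _ (fun t => - (t * s t ^ 2 / y t ^ 2)
  * (2 * (x t * y t) * v t ^ 2 + (2 * y t ^ 2 + gamma / 2 * s t ^ 2) * u t ^ 2)));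
  [lra | intros t Ht; apply Q_derive; lra |].
intros t Ht. pose proof (xy_pos t ltac:(lra)). pose proof (pow2_gt_0 _ (y_nonzero t ltac:(lra))).
pose proof (pow2_ge_0 (s t)). pose proof (pow2_ge_0 (u t)). pose proof (pow2_ge_0 (v t)).
assert (0 <= t * s t ^ 2 / y t ^ 2) by (apply Rdiv_le_0_compat; [apply Rmult_le_pos |]; lra).
assert (0 <= gamma / 2 * s t ^ 2) by (apply Rmult_le_pos; lra).
assert (0 <= 2 * (x t * y t) * v t ^ 2) by (apply Rmult_le_pos; lra).
assert (0 <= (2 * y t ^ 2 + gamma / 2 * s t ^ 2) * u t ^ 2) by (apply Rmult_le_pos; lra).
nra.
Qed.

Lemma Q_lim0 : lim0r Q 0.
Proof.
destruct txy_bounds as [c [Hc Hbd]]. destruct (s_leading n beta s z HNO) as [s0 [_ Hs]].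
assert (1 <= INR n) by (apply (le_INR 1); exact Hn).
apply (lim0r_ext (fun t => (s t / t ^ n) ^ 2 * (u t / Rpower t k) * (v t / Rpower t k)
  * Rpower t (2 * INR n + 2 * k) * (t ^ 2 / (t * y t))) _ _ 1); [lra | |].
- intros t Ht. unfold Qfun. pose proof (y_nonzero t ltac:(lra)). pose proof (Rpower_pos t k).
  assert (0 < t ^ n) by (apply pow_lt; lra).
  replace (2 * INR n + 2 * k) with (INR n + (INR n + (k + k))) by ring.
  rewrite !Rpower_plus, !Rpower_pow by lra. field. repeat split; lra.
- apply (lim0r_mult_bounded _ _ (/ c) 1); [lra | |].
  + intros t Ht. destruct (Hbd t ltac:(lra)) as [Hty _].
    rewrite Rmin_left in Hty by nra.
    assert (0 < c * t ^ 2) by (apply Rmult_lt_0_compat; [lra | apply pow_lt; lra]).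
    unfold Rdiv. rewrite Rabs_mult, Rabs_inv, (Rabs_pos_eq (t ^ 2)) by apply pow2_ge_0.
    apply (Rmult_le_reg_r (Rabs (t * y t))); [lra |].
    rewrite Rmult_assoc, Rinv_l by lra.
    apply Rle_trans with (/ c * (c * t ^ 2)); [right; field; lra |].
    apply Rmult_le_compat_l; [apply Rlt_le, Rinv_0_lt_compat; lra | exact Hty].
  + lim0r_compute; [lra | ring].
Qed.

Lemma Q_decay e : 0 < e -> exists R0, forall t, R0 < t -> Rabs (Q t) < e.
Proof.
intros He. destruct txy_bounds as [c [Hc Hbd]].
destruct (s_bounded n beta s z HNO) as [S [R1 HS]].
pose proof HW as [_ [_ [_ [_ [C [p [R2 [HR2 Hdecay]]]]]]]].
assert (Hsg : 0 < 2 * sqrt gamma) by (pose proof (sqrt_lt_R0 gamma (proj1 Hgamma)); lra).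
destruct (Rpower_exp_decay (S ^ 2 * C ^ 2 / c) (2 * p + 2) (2 * sqrt gamma) Hsg e He) as [R3 HR3].
exists (Rmax (Rmax 1 R1) (Rmax R2 R3)). intros t Ht.
pose proof (Rmax_l (Rmax 1 R1) (Rmax R2 R3)). pose proof (Rmax_r (Rmax 1 R1) (Rmax R2 R3)).
pose proof (Rmax_l 1 R1). pose proof (Rmax_r 1 R1).
pose proof (Rmax_l R2 R3). pose proof (Rmax_r R2 R3).
destruct (Hdecay t ltac:(lra)) as [Hut Hvt]. specialize (HS t ltac:(lra)).
destruct (Hbd t ltac:(lra)) as [Hty _]. rewrite Rmin_right in Hty by nra.
pose proof (y_nonzero t ltac:(lra)) as Hy.
set (E := C * Rpower t p * exp (- sqrt gamma * t)) in *.
assert (Hid : t ^ 2 * S ^ 2 * (E * E) / c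
  = S ^ 2 * C ^ 2 / c * Rpower t (2 * p + 2) * exp (- (2 * sqrt gamma) * t)).
{ unfold E. replace (2 * p + 2) with (p + (p + (1 + 1))) by ring.
  rewrite !Rpower_plus, Rpower_1 by lra.
  replace (- (2 * sqrt gamma) * t) with (- sqrt gamma * t + - sqrt gamma * t) by ring.
  rewrite exp_plus. field. lra. }
assert (HQ : Rabs (Q t) = t ^ 2 * Rabs (s t) ^ 2 * (Rabs (u t) * Rabs (v t)) * / Rabs (t * y t)).
{ unfold Qfun. replace (t * s t ^ 2 * u t * (v t / y t))
    with (t ^ 2 * s t ^ 2 * (u t * v t) * / (t * y t)) by (field; split; first [exact Hy | lra]).
  rewrite Rabs_mult, Rabs_inv, !Rabs_mult, <- !RPow_abs, (Rabs_pos_eq t) by lra. reflexivity. }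
apply Rle_lt_trans with (t ^ 2 * S ^ 2 * (E * E) / c); [| rewrite Hid; apply HR3; lra].
rewrite HQ. unfold Rdiv.
pose proof (Rabs_pos (s t)). pose proof (Rabs_pos (u t)). pose proof (Rabs_pos (v t)).
apply Rmult_le_compat.
- apply Rmult_le_pos; [apply Rmult_le_pos; [apply pow2_ge_0 | apply pow_le; lra] | nra].
- apply Rlt_le, Rinv_0_lt_compat. lra.
- apply Rmult_le_compat; [apply Rmult_le_pos; [apply pow2_ge_0 | apply pow_le; lra] | nra | |].
  + apply Rmult_le_compat_l; [apply pow2_ge_0 | apply pow_incr; lra].
  + apply Rmult_le_compat; lra.
- apply Rinv_le_contravar; lra.
Qed.

Lemma leading_coeffs_zero_outside : u0 = 0 /\ v0 = 0.
Proof.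
pose proof (nonincr_vanishing_at_ends Q Q_nonincr Q_lim0 Q_decay) as HQ0.
destruct (s_leading n beta s z HNO) as [s0 [Hs0 Hs]].
destruct (lim0r_nonzero_near _ _ Hs0 Hs) as [d [Hd Hsnz]].
assert (Huv : forall t, 0 < t < d -> u t = 0 /\ v t = 0).
{ intros t Ht.
  pose proof (is_derive_locally_zero _ _ t (proj1 Ht) HQ0 (Q_derive t (proj1 Ht))) as HdQ.
  assert (Hst : s t <> 0) by (intros E; apply (Hsnz t Ht); rewrite E; unfold Rdiv; ring).
  pose proof (xy_pos t (proj1 Ht)). pose proof (pow2_gt_0 _ (y_nonzero t (proj1 Ht))).
  pose proof (pow2_gt_0 _ Hst). pose proof (pow2_ge_0 (u t)). pose proof (pow2_ge_0 (v t)).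
  assert (0 < t * s t ^ 2 / y t ^ 2) by (apply Rdiv_lt_0_compat; [apply Rmult_lt_0_compat |]; lra).
  assert (0 <= gamma / 2 * s t ^ 2) by (apply Rmult_le_pos; lra).
  assert (0 <= 2 * (x t * y t) * v t ^ 2) by (apply Rmult_le_pos; lra).
  assert (0 <= (2 * y t ^ 2 + gamma / 2 * s t ^ 2) * u t ^ 2) by (apply Rmult_le_pos; lra).
  apply Rmult_integral in HdQ. destruct HdQ as [HdQ | HdQ]; [lra |].
  assert (Hv2 : v t ^ 2 = 0) by nra. assert (Hu2 : u t ^ 2 = 0) by nra.
  split; apply Rsqr_0_uniq; unfold Rsqr; lra. }
split.
- apply (lim0r_zero_near _ _ d Hd) with (2 := Hu).
  intros t Ht. rewrite (proj1 (Huv t Ht)). unfold Rdiv. ring.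
- apply (lim0r_zero_near _ _ d Hd) with (2 := Hv).
  intros t Ht. rewrite (proj2 (Huv t Ht)). unfold Rdiv. ring.
Qed.

End Perturbation.

Theorem theorem3 (n : nat) (beta gamma : R) (s z : R -> R) :
  (1 <= n)%nat -> 0 < beta -> 0 < gamma <= 1 ->
  NO_profile n beta s z ->
  forall m : Z,
    ~ (exists u v : R -> R,
         W_perturbation gamma n m s z u v /\
         exists r, 0 < r /\ (u r <> 0 \/ v r <> 0)).
Proof.
intros Hn _ Hgamma HNO m [u [v [HW [r0 [Hr0 Hnz]]]]].
pose proof HW as [_ [_ [_ [[k [u0 [v0 [eu [ev [Hk [Heu [Hev Huv]]]]]]]] _]]]].
pose proof (lim0r_leading_ratio u eu u0 k Heu (fun r Hr => proj1 (Huv r Hr))) as Hu.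
pose proof (lim0r_leading_ratio v ev v0 k Hev (fun r Hr => proj2 (Huv r Hr))) as Hv.
assert (H0 : u0 = 0 /\ v0 = 0).
{ destruct (Z_le_gt_dec (-2 * Z.of_nat n) m), (Z_le_gt_dec m (-1)).
  - exact (leading_coeffs_zero_indicial gamma n m beta s z u v Hgamma HNO HW k u0 v0 Hk Hu Hv
      ltac:(lia)).
  all: exact (leading_coeffs_zero_outside gamma n m beta s z u v Hgamma HNO HW k u0 v0 Hk Hu Hv
      Hn ltac:(lia)). }
destruct H0 as [-> ->]. destruct (Huv r0 Hr0) as [Eu Ev].
destruct Hnz as [Hnz | Hnz]; apply Hnz; [rewrite Eu | rewrite Ev]; ring.
Qed.
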